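(* For every integer $n\ge1$, the number of permutations $\pi\in S_n$ whose number of alignments equals $(k-1)(n-k)$, where $k$ is the number of weak excedences of $\pi$ (i.e. which have the maximal number of alignments given their number of weak excedences), is the Catalan number $C_n=\frac1n\binom{2n}{n+1}$.
   Context: Place $1,\dots,n$ clockwise on a circle. Distinct $p_1,\dots,p_m$ are in clockwise cyclic order if $(p_2-p_1)\bmod n<\dots<(p_m-p_1)\bmod n$ (residues in $\{0,\dots,n-1\}$). For $\pi\in S_n$ (fixed points regarded as ''counterclockwise loops''), an ordered pair $(i,j)$, $i\ne j$, is aligned if $\pi(j)\ne j$, the entries of $(i,\pi(i),\pi(j),j)$ are pairwise distinct except that possibly $i=\pi(i)$, and the distinct entries in this order are in clockwise cyclic order. An alignment is an unordered pair $\{i,j\}$ with $(i,j)$ or $(j,i)$ aligned. A weak excedence of $\pi$ is an $i$ with $\pi(i)\ge i$. For a permutation with $k$ weak excedences, $(k-1)(n-k)$ is the maximum possible number of alignments. *)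

(* Points 1..n of the circle are represented by 'I_n = {0..n-1}
   (shift by one; this preserves cyclic order and weak excedences). *)
From mathcomp Require Import all_boot all_fingroup.
Set Implicit Arguments. Unset Strict Implicit. Unset Printing Implicit Defensive.

Section Align.
Variable n : nat.

Definition cdist (a b : 'I_n) : nat := (b + n - a) %% n.

(* distinct p1,...,pm in clockwise cyclic order:
   (p2-p1) mod n < ... < (pm-p1) mod n *)
Definition cyc_order (s : seq 'I_n) : bool :=
  match s with
  | [::] => true
  | p1 :: t => sorted ltn [seq cdist p1 p | p <- t]
  end.

(* the list of distinct entries of (i, pi i, pi j, j), where i = pi i is allowed *)
Definition align_entries (pi : {perm 'I_n}) (i j : 'I_n) : seq 'I_n :=
  if pi i == i then [:: i; pi j; j] else [:: i; pi i; pi j; j].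

Definition aligned (pi : {perm 'I_n}) (i j : 'I_n) : bool :=
  [&& i != j, pi j != j, uniq (align_entries pi i j)
    & cyc_order (align_entries pi i j)].

(* number of alignments: unordered pairs {i,j} (counted once via i < j) *)
Definition nalign (pi : {perm 'I_n}) : nat :=
  #|[set p : 'I_n * 'I_n | (p.1 < p.2)%N && (aligned pi p.1 p.2 || aligned pi p.2 p.1)]|.

Definition wex (pi : {perm 'I_n}) : nat := #|[set i : 'I_n | (i <= pi i)%N]|.

End Align.

From mathcomp Require Import all_boot all_fingroup.
From mathcomp Require Import zify.
Set Implicit Arguments. Unset Strict Implicit. Unset Printing Implicit Defensive.

(* Every permutation of 'I_n.+1 arises from a unique s in 'I_n and t <= n by
   inserting n into the cycle of s right after t (so t |-> n |-> s t), or as a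
   new fixed point when t = n.  Compared with the bound (k-1)(n-k), k the number
   of weak excedences, such an insertion loses a nonnegative number of
   alignments: none for the new fixed point, twice the number of weak
   excedences o < t with s o > s t when t is a weak excedence, and an odd number
   otherwise.  Hence the maximal permutations of size n+1 are the insertions into
   maximal s at the fixed-point site or at an active site, a weak excedence t
   with no such o.  The insertion at the fixed point has h+1 active sites when s
   has h, and the insertion after the r-th active site has r: this is the
   Catalan generating tree, whose level n has the ballot number
   C(2n-h-1, n-1) - C(2n-h-1, n) of nodes with h sites.  Every node has exactly
   one child with a single site, so the maximal permutations of size n are
   counted by C(2n, n) - C(2n, n+1) = C_n. *)

Lemma sum_nat_delta n t (a : nat) :
  \sum_(0 <= i < n) (if i == t then a else 0) = if t < n then a else 0.
Proof. by rewrite -big_mkcond big_nat1_eq. Qed.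

Lemma sum2_cross n t (X : nat -> nat -> nat) : t < n -> X t t = 0 ->
  \sum_(0 <= i < n) \sum_(0 <= j < n) X i j =
  \sum_(0 <= i < n) \sum_(0 <= j < n) (if (i == t) || (j == t) then 0 else X i j)
  + \sum_(0 <= j < n) X t j + \sum_(0 <= i < n) X i t.
Proof.
move=> ht Xtt.
have delta a : \sum_(0 <= i < n) (if i == t then a else 0) = a.
  by rewrite sum_nat_delta ht.
have -> : \sum_(0 <= j < n) X t j =
    \sum_(0 <= i < n) \sum_(0 <= j < n) (if i == t then X i j else 0).
  rewrite -(delta (\sum_(0 <= j < n) X t j)).
  by apply: eq_bigr => i _; case: eqP => [->|_]; rewrite ?big1_eq.
have -> : \sum_(0 <= i < n) X i t =
    \sum_(0 <= i < n) \sum_(0 <= j < n) (if j == t then X i j else 0).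
  by apply: eq_bigr => i _; rewrite -(delta (X i t)); apply: eq_bigr => j _; case: eqP => [->|].
rewrite -!big_split; apply: eq_bigr => i _; rewrite -!big_split; apply: eq_bigr => j _ /=.
by case: eqP => [->|_]; case: eqP => [->|_]; rewrite /= ?Xtt ?addn0.
Qed.

Lemma sum_rank_eq n (P : pred nat) h :
  \sum_(0 <= t < n) (P t && (\sum_(0 <= s < t.+1) P s == h) : nat)
  = (0 < h <= \sum_(0 <= s < n) P s).
Proof.
elim: n => [|n IH]; first by rewrite !big_geq //; lia.
rewrite !big_nat_recr //= IH.
by case: (P n) => /=; lia.
Qed.

(** * Alignments as sums over positions *)

Definition align_nat (i j a b : nat) : bool :=
  ((j < i) && (a < b) && ((i <= a) == (j <= b)))
  || (~~ (j <= b) && (i <= a) && ((j < i) || (a < b))).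

Lemma align_nat_irr i a : align_nat i i a a = false.
Proof. rewrite /align_nat; lia. Qed.

Lemma cdistE n (a b : 'I_n) : cdist a b = if a <= b then b - a else b + n - a.
Proof.
rewrite /cdist; have ha := ltn_ord a; have hb := ltn_ord b.
case: leqP => h; last by rewrite modn_small //; lia.
by rewrite (_ : b + n - a = (b - a) + n) ?modnDr ?modn_small //; lia.
Qed.

Lemma alignedE n (s : {perm 'I_n}) (i j : 'I_n) :
  aligned s i j = align_nat i j (s i) (s j).
Proof.
have key : (i == j) = (s i == s j) by rewrite (inj_eq (@perm_inj _ s)).
rewrite /aligned /align_entries.
move: key (ltn_ord i) (ltn_ord j) (ltn_ord (s i)) (ltn_ord (s j)).
move: (s i) (s j) => pi pj.
case: ifP => /= hpi; rewrite !inE /= !andbT !cdistE; move: hpi;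
  rewrite -!val_eqE /=; move: (val i) (val j) (val pi) (val pj) => I J P Q.
- move=> /eqP -> key hI hJ hP hQ; rewrite /align_nat; repeat case: ifP => ?; lia.
- move=> /negbT hp key hI hJ hP hQ; rewrite /align_nat; repeat case: ifP => ?; lia.
Qed.

Definition permf n (s : {perm 'I_n}) (x : nat) : nat :=
  if (insub x : option 'I_n) is Some i then nat_of_ord (s i) else x.

Lemma permfE n (s : {perm 'I_n}) (i : 'I_n) : permf s i = s i.
Proof. by rewrite /permf valK. Qed.

Lemma permf_lt n (s : {perm 'I_n}) x : x < n -> permf s x < n.
Proof. by move=> hx; rewrite /permf insubT. Qed.

Lemma permf_eq n (s : {perm 'I_n}) x y : x < n -> y < n ->
  (permf s x == permf s y) = (x == y).
Proof.
move=> hx hy; rewrite /permf !insubT /=.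
by rewrite val_eqE (inj_eq (@perm_inj _ s)) -val_eqE.
Qed.

Definition align_count n (f : nat -> nat) : nat :=
  \sum_(0 <= i < n) \sum_(0 <= j < n) align_nat i j (f i) (f j).

Definition wex_count n (f : nat -> nat) : nat := \sum_(0 <= i < n) (i <= f i).

Lemma eq_align_count n f g : (forall x, x < n -> f x = g x) ->
  align_count n f = align_count n g.
Proof.
move=> fg; apply: eq_big_nat => i /andP[_ hi].
by apply: eq_big_nat => j /andP[_ hj]; rewrite !fg.
Qed.

Lemma eq_wex_count n f g : (forall x, x < n -> f x = g x) ->
  wex_count n f = wex_count n g.
Proof. by move=> fg; apply: eq_big_nat => i /andP[_ hi]; rewrite fg. Qed.

(* Alignment is asymmetric, so the unordered pairs of [nalign] are the ordered
   aligned pairs. *)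
Lemma nalignE n (s : {perm 'I_n}) : nalign s = align_count n (permf s).
Proof.
have key (i j : 'I_n) : (nat_of_ord i == j) = (nat_of_ord (s i) == s j).
  by rewrite !val_eqE (inj_eq (@perm_inj _ s)).
have -> : align_count n (permf s) =
    \sum_(i : 'I_n) \sum_(j : 'I_n) align_nat i j (s i) (s j).
  rewrite /align_count big_mkord; apply: eq_bigr => i _.
  by rewrite big_mkord; apply: eq_bigr => j _; rewrite !permfE.
have -> : \sum_(i : 'I_n) \sum_(j : 'I_n) align_nat i j (s i) (s j) =
    \sum_(i : 'I_n) \sum_(j : 'I_n) ((i < j) && align_nat i j (s i) (s j)) +
    \sum_(i : 'I_n) \sum_(j : 'I_n) ((i < j) && align_nat j i (s j) (s i)).
  rewrite [X in _ = _ + X]exchange_big -big_split /=; apply: eq_bigr => i _.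
  rewrite -big_split /=; apply: eq_bigr => j _.
  by have := key i j; rewrite /align_nat; lia.
rewrite /nalign -sum1dep_card big_mkcond -big_split /=.
rewrite -(pair_bigA _ (fun i j : 'I_n =>
  if (i < j) && (aligned s i j || aligned s j i) then 1 else 0)) /=.
apply: eq_bigr => i _; rewrite -big_split /=; apply: eq_bigr => j _.
by rewrite !alignedE; have := key i j; rewrite /align_nat; case: ifP; lia.
Qed.

Lemma wexE n (s : {perm 'I_n}) : wex s = wex_count n (permf s).
Proof.
rewrite /wex -sum1dep_card big_mkcond /= /wex_count big_mkord.
by apply: eq_bigr => i _; rewrite permfE; case: leqP.
Qed.

Lemma align_countS n f : align_count n.+1 f = align_count n f
  + \sum_(0 <= i < n) align_nat i n (f i) (f n)
  + \sum_(0 <= j < n) align_nat n j (f n) (f j).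
Proof.
rewrite /align_count big_nat_recr //= big_nat_recr //= align_nat_irr addn0.
rewrite -!big_split /=; apply: eq_bigr => i _.
by rewrite big_nat_recr.
Qed.

Lemma wex_count_compl n f : wex_count n f + \sum_(0 <= i < n) (f i < i) = n.
Proof.
rewrite /wex_count -big_split /= -[RHS](subn0 n) -[RHS]muln1.
by rewrite -sum_nat_const_nat; apply: eq_bigr => i _; case: leqP.
Qed.

Lemma wex_count_le n f : wex_count n f <= n.
Proof. by rewrite -[leqRHS](wex_count_compl n f) leq_addr. Qed.

Lemma wex_count_gt0 n f : 0 < n -> 0 < wex_count n f.
Proof. by case: n => // n _; rewrite /wex_count big_ltn. Qed.

(** * Inserting the maximum into a cycle *)

(* For [t = n] this adds [n] as a fixed point. *)
Definition cycle_insert (f : nat -> nat) (t n x : nat) : nat :=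
  if x == t then n else if x == n then f t else f x.

Definition blockers (f : nat -> nat) (t : nat) : nat :=
  \sum_(0 <= o < t) ((o <= f o) && (f t < f o)).

Definition insert_deficit n (f : nat -> nat) (t : nat) : nat :=
  if t == n then 0
  else if t <= f t then 2 * blockers f t
  else (2 * \sum_(0 <= i < n) [&& t < i, f i < i & f i < f t]).+1.

Definition active_site (f : nat -> nat) (t : nat) : bool :=
  (t <= f t) && (blockers f t == 0).

Definition nactive n (f : nat -> nat) : nat := \sum_(0 <= t < n) active_site f t.

Lemma insert_deficit_eq0 n f t : t < n ->
  (insert_deficit n f t == 0) = active_site f t.
Proof.
by move=> ht; rewrite /insert_deficit /active_site (ltn_eqF ht); case: leqP; rewrite ?muln_eq0.
Qed.

Lemma eq_active_site f g t : (forall o, o <= t -> f o = g o) ->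
  active_site f t = active_site g t.
Proof.
move=> fg; rewrite /active_site /blockers fg //.
by congr (_ && (_ == 0)); apply: eq_big_nat => o /andP[_ ho]; rewrite !fg // ltnW.
Qed.

Lemma eq_nactive n f g : (forall x, x < n -> f x = g x) -> nactive n f = nactive n g.
Proof.
move=> fg; apply: eq_big_nat => t /andP[_ ht]; congr (nat_of_bool _).
by apply: eq_active_site => o ho; apply: fg; apply: leq_ltn_trans ht.
Qed.

Lemma nactive_le n f : nactive n f <= n.
Proof.
rewrite -[leqRHS]muln1 -[n in n * 1]subn0 -sum_nat_const_nat.
by apply: leq_sum => t _; apply: leq_b1.
Qed.

Lemma nactive_gt0 n f : 0 < n -> 0 < nactive n f.
Proof. by case: n => // n _; rewrite /nactive big_ltn // /active_site /blockers big_geq. Qed.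

Definition max_align n k := k.-1 * (n - k).

Lemma max_alignS_wex n k : 0 < k <= n -> max_align n.+1 k = max_align n k + k.-1.
Proof. by case: k => [|k] //= hk; rewrite /max_align subSn //= mulnS addnC. Qed.

Lemma max_alignS_nwex n k : (0 < n -> 0 < k) -> k <= n ->
  max_align n.+1 k.+1 = max_align n k + (n - k).
Proof.
rewrite /max_align subSS; case: k => [|k] /= hk hkn; last by rewrite mulSn addnC.
by case: n hk hkn => [|n] // /(_ isT).
Qed.

Section Insertion.
Variables (n : nat) (f : nat -> nat).
Hypothesis f_lt : forall x, x < n -> f x < n.
Hypothesis f_eq : forall x y, x < n -> y < n -> (f x == f y) = (x == y).

Lemma cycle_insert_lt t x : x < n -> cycle_insert f t n x = if x == t then n else f x.
Proof. by move=> hx; rewrite /cycle_insert (ltn_eqF hx). Qed.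

Lemma wex_count_insert t : t <= n ->
  wex_count n.+1 (cycle_insert f t n) = wex_count n f + ((t == n) || (f t < t)).
Proof.
move=> htn; rewrite /wex_count big_nat_recr //= {2}/cycle_insert eqxx.
have -> : \sum_(0 <= i < n) (i <= cycle_insert f t n i) =
    \sum_(0 <= i < n) ((i <= f i) + (if i == t then f t < t : nat else 0)).
  apply: eq_big_nat => i /andP[_ hi]; rewrite cycle_insert_lt //.
  by case: eqP => [->|_]; [have := f_lt hi; lia | rewrite addn0].
rewrite big_split /= sum_nat_delta.
case: (ltnP t n) => ht; last first.
  have -> : t = n by lia.
  by rewrite eqxx leqnn addn0.
by rewrite (gtn_eqF ht) (ltn_eqF ht); have := f_lt ht; lia.
Qed.

Lemma align_count_insert_fix :
  align_count n.+1 (cycle_insert f n n) = align_count n f + (n - wex_count n f).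
Proof.
have gn : cycle_insert f n n n = n by rewrite /cycle_insert eqxx.
have gi x : x < n -> cycle_insert f n n x = f x.
  by move=> hx; rewrite cycle_insert_lt // (ltn_eqF hx).
have -> : n - wex_count n f = \sum_(0 <= i < n) (f i < i).
  by have := wex_count_compl n f; lia.
rewrite align_countS (eq_align_count gi) gn -addnA.
congr (_ + _); rewrite -big_split; apply: eq_big_nat => i /andP[_ hi] /=.
by rewrite gi //; have := f_lt hi; rewrite /align_nat; lia.
Qed.

Lemma align_count_insert t : t < n ->
  align_count n.+1 (cycle_insert f t n) + \sum_(0 <= j < n) align_nat t j (f t) (f j)
    + \sum_(0 <= i < n) align_nat i t (f i) (f t)
  = align_count n f + \sum_(0 <= j < n) ((f j < j) && (j < t))
    + \sum_(0 <= i < n) ((t < i) && (i <= f i))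
    + \sum_(0 <= i < n) ((i <= f i) && (f i < f t))
    + \sum_(0 <= j < n) ((f t < f j) && (f j < j)).
Proof.
move=> ht; set g := cycle_insert f t n.
have gi x : x < n -> g x = if x == t then n else f x by exact: cycle_insert_lt.
have gn : g n = f t by rewrite /g /cycle_insert (gtn_eqF ht) eqxx.
have cross h := @sum2_cross n t (fun i j => align_nat i j (h i) (h j)) ht
  ltac:(by rewrite /= align_nat_irr).
rewrite align_countS gn /align_count (cross g) (cross f).
have -> : \sum_(0 <= i < n) \sum_(0 <= j < n)
    (if (i == t) || (j == t) then 0 else align_nat i j (g i) (g j)) =
  \sum_(0 <= i < n) \sum_(0 <= j < n)
    (if (i == t) || (j == t) then 0 else align_nat i j (f i) (f j)).
  apply: eq_big_nat => i /andP[_ hi]; apply: eq_big_nat => j /andP[_ hj].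
  by rewrite !gi //; case: (i == t) (j == t) => [] [].
have rowcol : \sum_(0 <= j < n) align_nat t j (g t) (g j)
    + \sum_(0 <= i < n) align_nat i t (g i) (g t)
    + \sum_(0 <= i < n) align_nat i n (g i) (f t)
    + \sum_(0 <= j < n) align_nat n j (f t) (g j)
  = \sum_(0 <= j < n) ((f j < j) && (j < t))
    + \sum_(0 <= i < n) ((t < i) && (i <= f i))
    + \sum_(0 <= i < n) ((i <= f i) && (f i < f t))
    + \sum_(0 <= j < n) ((f t < f j) && (f j < j)).
  rewrite -!big_split; apply: eq_big_nat => j /andP[_ hj] /=.
  rewrite !gi // eqxx; have := f_lt ht; case: (j =P t) => [->|/eqP jt].
    by rewrite /align_nat; lia.
  by have := f_lt hj; have := f_eq hj ht; rewrite (negbTE jt) /align_nat; lia.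
lia.
Qed.

Lemma align_count_insert_wex t : t < n -> t <= f t ->
  align_count n.+1 (cycle_insert f t n) + 2 * blockers f t
  = align_count n f + (wex_count n f).-1.
Proof.
move=> ht htf; rewrite /blockers (big_nat_widen _ _ _ _ _ (ltnW ht)) big_mkcond /=.
have := align_count_insert ht.
have : \sum_(0 <= j < n) align_nat t j (f t) (f j)
    + \sum_(0 <= i < n) align_nat i t (f i) (f t) + wex_count n f
  = \sum_(0 <= j < n) ((f j < j) && (j < t))
    + \sum_(0 <= i < n) ((t < i) && (i <= f i))
    + \sum_(0 <= i < n) ((i <= f i) && (f i < f t))
    + \sum_(0 <= j < n) ((f t < f j) && (f j < j))
    + 2 * \sum_(0 <= o < n) (if o < t then (o <= f o) && (f t < f o) : nat else 0)
    + \sum_(0 <= i < n) (if i == t then 1 else 0).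
  rewrite /wex_count big_distrr /= -!big_split; apply: eq_big_nat => i /andP[_ hi] /=.
  have := f_lt hi; have := f_lt ht; case: (i =P t) => [->|/eqP it].
    by rewrite ltnn /align_nat; lia.
  by have := f_eq hi ht; rewrite (negbTE it) /align_nat; case: ifP; lia.
rewrite sum_nat_delta ht.
have : 0 < wex_count n f by apply: wex_count_gt0; apply: leq_ltn_trans ht.
by case: (wex_count n f) => //= k; lia.
Qed.

Lemma align_count_insert_nwex t : t < n -> f t < t ->
  align_count n.+1 (cycle_insert f t n)
    + (2 * \sum_(0 <= i < n) [&& t < i, f i < i & f i < f t]).+1
  = align_count n f + (n - wex_count n f).
Proof.
move=> ht hft; have := align_count_insert ht; have := wex_count_compl n f.
have : \sum_(0 <= j < n) ((f j < j) && (j < t))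
    + \sum_(0 <= i < n) ((t < i) && (i <= f i))
    + \sum_(0 <= i < n) ((i <= f i) && (f i < f t))
    + \sum_(0 <= j < n) ((f t < f j) && (f j < j))
    + 2 * \sum_(0 <= i < n) [&& t < i, f i < i & f i < f t]
    + \sum_(0 <= i < n) (if i == t then 1 else 0)
  = \sum_(0 <= j < n) align_nat t j (f t) (f j)
    + \sum_(0 <= i < n) align_nat i t (f i) (f t)
    + \sum_(0 <= i < n) (f i < i).
  rewrite big_distrr /= -!big_split; apply: eq_big_nat => i /andP[_ hi] /=.
  have := f_lt hi; have := f_lt ht; case: (i =P t) => [->|/eqP it].
    by rewrite /align_nat; lia.
  by have := f_eq hi ht; rewrite (negbTE it) /align_nat; lia.
rewrite sum_nat_delta ht; lia.
Qed.

Lemma align_count_insert_deficit t : t <= n ->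
  align_count n.+1 (cycle_insert f t n) + insert_deficit n f t
    + max_align n (wex_count n f)
  = align_count n f + max_align n.+1 (wex_count n.+1 (cycle_insert f t n)).
Proof.
move=> htn; have Kle := wex_count_le n f; have Kpos := @wex_count_gt0 n f.
rewrite wex_count_insert // /insert_deficit.
have [->|tn] := eqVneq t n.
  rewrite /= addn1 max_alignS_nwex // align_count_insert_fix; lia.
have ht : t < n by rewrite ltn_neqAle tn.
have {}Kpos : 0 < wex_count n f by apply: Kpos; lia.
rewrite /=; case: leqP => htf.
  rewrite addn0 max_alignS_wex ?Kpos ?Kle //.
  by have := align_count_insert_wex ht htf; lia.
rewrite addn1 max_alignS_nwex //.
by have := align_count_insert_nwex ht htf; lia.
Qed.

Lemma nactive_insert_fix : nactive n.+1 (cycle_insert f n n) = (nactive n f).+1.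
Proof.
have gi x : x < n -> cycle_insert f n n x = f x.
  by move=> hx; rewrite cycle_insert_lt // (ltn_eqF hx).
rewrite [LHS]/nactive big_nat_recr //= -/(nactive n _) (eq_nactive gi) -[RHS]addn1.
congr (_ + _).
have gn : cycle_insert f n n n = n by rewrite /cycle_insert eqxx.
rewrite /active_site /blockers gn leqnn big_nat_cond big1 // => o /andP[/andP[_ ho] _].
by rewrite gi //; have := f_lt ho; lia.
Qed.

Lemma nactive_insert t : t < n -> active_site f t ->
  nactive n.+1 (cycle_insert f t n) = \sum_(0 <= s < t.+1) active_site f s.
Proof.
move=> ht act; set g := cycle_insert f t n.
have gi x : x < n -> g x = if x == t then n else f x by exact: cycle_insert_lt.
have gn : g n = f t by rewrite /g /cycle_insert (gtn_eqF ht) eqxx.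
rewrite /nactive big_nat_recr //= {2}/active_site gn leqNgt f_lt // addn0.
rewrite (big_nat_widen _ _ _ _ _ ht) [RHS]big_mkcond /=.
apply: eq_big_nat => s /andP[_ hs].
case: (ltngtP s t) => [lt_st|gt_st|->].
- rewrite ltnS ltnW //; congr (nat_of_bool _); apply: eq_active_site => o hos.
  by rewrite gi ?(ltn_eqF (leq_ltn_trans hos lt_st)) //; lia.
- (* t, now mapped to n, blocks s *)
  rewrite ltnNge gt_st /=; suff -> : active_site g s = false by [].
  apply/negbTE; rewrite /active_site negb_and -lt0n orbC; apply/orP; left.
  rewrite /blockers (bigD1_seq t) ?mem_index_iota ?iota_uniq //=.
  by rewrite gi // eqxx gi // (gtn_eqF gt_st) f_lt // (ltnW ht).
- rewrite ltnSn act /active_site gi // eqxx (ltnW ht) /=.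
  rewrite /blockers big_nat_cond big1 // => o /andP[/andP[_ hot] _].
  by rewrite !gi ?eqxx ?(ltn_eqF hot) //; [have := f_lt (ltn_trans hot ht); lia | lia].
Qed.

End Insertion.

(** * Permutations as insertions *)

(* [insert_perm s t] sends [t] to [n] and [n] to [s t]; recall that [p * q]
   applies [p] first. *)
Definition insert_perm n (s : {perm 'I_n}) (t : 'I_n.+1) : {perm 'I_n.+1} :=
  tperm t ord_max * lift_perm ord_max ord_max s.

Lemma lift_perm_maxE n (s : {perm 'I_n}) (y : 'I_n.+1) :
  nat_of_ord (lift_perm ord_max ord_max s y) = if nat_of_ord y == n then n else permf s y.
Proof.
case: (unliftP ord_max y) => [k ->|->]; last by rewrite lift_perm_id /= eqxx.
have lift_val (j : 'I_n) : nat_of_ord (lift ord_max j) = j.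
  by rewrite /= /bump leqNgt ltn_ord.
by rewrite lift_perm_lift !lift_val ltn_eqF // permfE.
Qed.

Lemma permf_insert n (s : {perm 'I_n}) (t : 'I_n.+1) x :
  permf (insert_perm s t) x = cycle_insert (permf s) t n x.
Proof.
rewrite /cycle_insert; case: (ltnP x n.+1) => hx; last first.
  have out m : m <= x -> (insub x : option 'I_m) = None.
    by move=> hm; rewrite insubF // ltnNge hm.
  by rewrite /permf out // out ?(ltnW hx) // (gtn_eqF (leq_trans (ltn_ord t) hx)) (gtn_eqF hx).
rewrite -[x]/(nat_of_ord (Ordinal hx)) permfE permM lift_perm_maxE.
case: tpermP => [->|->|/eqP ht /eqP hn] /=.
- by rewrite !eqxx.
- by rewrite eqxx eq_sym; case: eqP => [->|].
- by have /negbTE -> : x != t := ht; have /negbTE -> : x != n := hn.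
Qed.

Lemma insert_perm_inj n :
  injective (fun st : {perm 'I_n} * 'I_n.+1 => insert_perm st.1 st.2).
Proof.
have at_t (s : {perm 'I_n}) t : insert_perm s t t = ord_max.
  by rewrite permM tpermL lift_perm_id.
move=> [s1 t1] [s2 t2] /= E.
have et : t1 = t2 by apply: (@perm_inj _ (insert_perm s2 t2)); rewrite at_t -E at_t.
subst t2; move: E => /mulgI E; congr (_, _); apply/permP => k.
by apply: (@lift_inj _ ord_max); rewrite -!(@lift_perm_lift n ord_max ord_max) E.
Qed.

Lemma insert_perm_bij n :
  bijective (fun st : {perm 'I_n} * 'I_n.+1 => insert_perm st.1 st.2).
Proof.
apply: inj_card_bij; first exact: insert_perm_inj.
by rewrite card_prod !card_Sn card_ord factS mulnC.
Qed.

Lemma sum_perm_insert n (F : {perm 'I_n.+1} -> nat) :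
  \sum_(p : {perm 'I_n.+1}) F p =
  \sum_(s : {perm 'I_n}) \sum_(t : 'I_n.+1) F (insert_perm s t).
Proof.
rewrite (reindex _ (onW_bij _ (insert_perm_bij n))) /=.
by rewrite -(pair_bigA _ (fun s t => F (insert_perm s t))).
Qed.

Definition max_aligned n (s : {perm 'I_n}) : bool := nalign s == max_align n (wex s).

Lemma nalign_insert n (s : {perm 'I_n}) (t : 'I_n.+1) :
  nalign (insert_perm s t) + insert_deficit n (permf s) t + max_align n (wex s)
  = nalign s + max_align n.+1 (wex (insert_perm s t)).
Proof.
have ins x (_ : x < n.+1) := permf_insert s t x.
rewrite !nalignE !wexE (eq_align_count ins) (eq_wex_count ins).
by apply: align_count_insert_deficit; [exact: permf_lt | exact: permf_eq | rewrite -ltnS].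
Qed.

Lemma nalign_le_max n (s : {perm 'I_n}) : nalign s <= max_align n (wex s).
Proof.
elim: n s => [s|n IH p]; first by rewrite nalignE /align_count big_geq.
case: (insert_perm_bij n) => g _ gK; rewrite -[p]gK.
by have := nalign_insert (g p).1 (g p).2; have := IH (g p).1; lia.
Qed.

Lemma max_aligned_insert n (s : {perm 'I_n}) (t : 'I_n.+1) :
  max_aligned (insert_perm s t)
  = max_aligned s && ((nat_of_ord t == n) || active_site (permf s) t).
Proof.
have -> : (nat_of_ord t == n) || active_site (permf s) t
    = (insert_deficit n (permf s) t == 0).
  case: (ltnP t n) => ht; first by rewrite (ltn_eqF ht) insert_deficit_eq0.
  have /eqP tn : nat_of_ord t == n by rewrite eqn_leq ht -ltnS ltn_ord.
  by rewrite /insert_deficit tn eqxx.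
have := nalign_insert s t; have := nalign_le_max s.
rewrite /max_aligned; case: eqP => h1; case: eqP => h2; case: eqP => h3 //=; lia.
Qed.

(** * Ballot numbers *)

Section Ballot.
Variable g : nat -> nat -> nat.
Hypothesis g00 : g 0 0 = 1.
Hypothesis gS0 : forall n, g n.+1 0 = 0.
Hypothesis g_gt : forall n h, n < h -> g n h = 0.
Hypothesis gS : forall n h, 0 < h -> g n.+1 h = g n.+1 h.+1 + g n h.-1.

Lemma ballot_closed n h : 0 < h <= n ->
  g n h + 'C(n.*2 - h.+1, n) = 'C(n.*2 - h.+1, n.-1).
Proof.
elim: n h => [|n IHn] h hh; first lia.
have gnn : g n n = 1.
  case: n IHn {hh} => [|m] IHn; first exact: g00.
  have := IHn m.+1 ltac:(lia).
  by rewrite (_ : m.+1.*2 - m.+2 = m) ?binn ?bin_small //; lia.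
(* Downward induction on h, from h = n.+1. *)
have [d] : exists d, h + d = n.+1 by exists (n.+1 - h); lia.
elim: d h hh => [|d IHd] h hh hd.
  have -> : h = n.+1 by lia.
  rewrite gS // g_gt // gnn (_ : n.+1.*2 - n.+2 = n) ?binn ?bin_small //; lia.
rewrite gS; last lia.
have := IHd h.+1 ltac:(lia) ltac:(lia).
case: n IHn gnn hh hd {IHd} => [|m] IHn _ hh hd; first lia.
set a := m.+1.*2 - h.
rewrite (_ : m.+2.*2 - h.+2 = a); last by rewrite /a; lia.
rewrite (_ : m.+2.*2 - h.+1 = a.+1); last by rewrite /a; lia.
rewrite !binS /=.
case: (ltngtP h 1) => h1; first lia.
- have := IHn h.-1 ltac:(lia).
  rewrite (_ : m.+1.*2 - h.-1.+1 = a) /=; [lia | rewrite /a; lia].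
- subst h; rewrite gS0.
  have : 'C(a, m) = 'C(a, m.+1).
    by rewrite -bin_sub /a; [congr 'C(_, _) | ]; lia.
  lia.
Qed.

End Ballot.

Lemma catalan_bin n : 0 < n ->
  'C(n.*2, n.+1) %/ n + 'C(n.*2, n.+1) = 'C(n.*2, n).
Proof.
move=> hn; have := mul_bin_left n.*2 n.
rewrite (_ : n.*2 - n = n); last lia.
move=> E; have -> : 'C(n.*2, n.+1) = ('C(n.*2, n) - 'C(n.*2, n.+1)) * n by nia.
rewrite mulnK //; nia.
Qed.

(** * The generating tree of maximal permutations *)

Definition nmax_active n h : nat :=
  \sum_(s : {perm 'I_n}) (max_aligned s && (nactive n (permf s) == h)).

Definition nmax_active_ge n h : nat :=
  \sum_(s : {perm 'I_n}) (max_aligned s && (h <= nactive n (permf s))).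

Lemma nmax_activeS n h : 0 < h ->
  nmax_active n.+1 h = nmax_active n h.-1 + nmax_active_ge n h.
Proof.
move=> hh; rewrite /nmax_active sum_perm_insert -big_split; apply: eq_bigr => s _ /=.
have ins t x (_ : x < n.+1) := permf_insert s t x.
have s_lt := @permf_lt n s.
rewrite big_ord_recr /= addnC; congr (_ + _).
  rewrite max_aligned_insert eqxx andbT (eq_nactive (ins _)) nactive_insert_fix //.
  by case: h hh.
case: (boolP (max_aligned s)) => ms /=; last first.
  by rewrite big1 // => i _; rewrite max_aligned_insert (negbTE ms).
have := sum_rank_eq n (active_site (permf s)) h; rewrite hh /= => <-.
rewrite big_mkord; apply: eq_bigr => i _.
rewrite max_aligned_insert ms /= (ltn_eqF (ltn_ord i)) /=.
case: (boolP (active_site (permf s) i)) => act //=.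
by rewrite (eq_nactive (ins _)) (nactive_insert s_lt (ltn_ord i) act).
Qed.

Lemma nmax_active_ge_split n h :
  nmax_active_ge n h = nmax_active n h + nmax_active_ge n h.+1.
Proof.
rewrite /nmax_active_ge /nmax_active -big_split; apply: eq_bigr => s _ /=.
by case: (max_aligned s) => //=; case: ltngtP.
Qed.

Lemma nmax_active_gt n h : n < h -> nmax_active n h = 0.
Proof.
move=> hn; rewrite /nmax_active big1 // => s _.
by have := nactive_le n (permf s); case: eqP => [->|]; [lia | rewrite andbF].
Qed.

Lemma nmax_active00 : nmax_active 0 0 = 1.
Proof.
rewrite /nmax_active (eq_bigr (fun _ => 1)) ?sum1_card ?card_Sn //.
by move=> s _; rewrite /max_aligned nalignE wexE /align_count /wex_count /nactive !big_geq.
Qed.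

Lemma nmax_activeS0 n : nmax_active n.+1 0 = 0.
Proof.
rewrite /nmax_active big1 // => s _.
by rewrite eqn0Ngt nactive_gt0 // andbF.
Qed.

Lemma nmax_active_ballot n h : 0 < h <= n ->
  nmax_active n h + 'C(n.*2 - h.+1, n) = 'C(n.*2 - h.+1, n.-1).
Proof.
apply: ballot_closed.
- exact: nmax_active00.
- exact: nmax_activeS0.
- exact: nmax_active_gt.
- move=> m k hk; rewrite !nmax_activeS // (nmax_active_ge_split m k) /=; lia.
Qed.

Theorem mainTheorem15 (n : nat) : (1 <= n)%N ->
  #|[set pi : {perm 'I_n} | nalign pi == ((wex pi).-1 * (n - wex pi))%N]|
  = ('C(n.*2, n.+1) %/ n)%N.
Proof.
move=> hn.
have -> : #|[set pi : {perm 'I_n} | nalign pi == ((wex pi).-1 * (n - wex pi))%N]|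
    = nmax_active n.+1 1.
  rewrite nmax_activeS // -(prednK hn) nmax_activeS0 prednK //.
  rewrite /nmax_active_ge -sum1dep_card big_mkcond; apply: eq_bigr => s _ /=.
  by rewrite nactive_gt0 // andbT /max_aligned; case: eqP.
have := nmax_active_ballot (n := n.+1) (h := 1) isT.
have := catalan_bin hn.
rewrite (_ : n.+1.*2 - 2 = n.*2) /=; lia.
Qed.
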